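(* Under the standing setup below, assume $h\in(0,d_{min})$. If $g$ is a continuous bounded function on $\mathcal L(t)$ such that $Q_hg=g$, where $Q_hg(x)=\int_{\mathcal L(t)}q_h(x,y)g(y)\,\mu^t(dy)$, then $g$ is constant on each connected component $\mathcal C_1,\dots,\mathcal C_\ell$ of $\mathcal L(t)$.
   Context: Standing setup. Let $X_1$ be a random vector in $\mathbb R^d$ with law $\mu$ having a Lebesgue density $f$. For $s\in\mathbb R$ let $\mathcal L(s)=\{x\in\mathbb R^d: f(x)\ge s\}$. A level $t>0$ in the interior of the range of $f$ is fixed; $\mathcal L(t)$ is nonempty and compact, with finitely many connected components $\mathcal C_1,\dots,\mathcal C_\ell$, and $d_{min}=\min_{i\neq j}\mathrm{dist}(\mathcal C_i,\mathcal C_j)$. Assumption 1: (i) $f$ is of class $C^2$ on $\mathbb R^d$; (ii) $\|D_xf\|>0$ on $\{x: f(x)=t\}$; (iii) $f$, $D_xf$, $D_x^2f$ are uniformly bounded on $\mathbb R^d$. $B$ denotes the unit ball of $\mathbb R^d$ centered at $0$. Assumption 2: $k:\mathbb R^d\to\mathbb R_+$ satisfies (i) $k$ is $C^2$; (ii) the support of $k$ is $B$; (iii) $k$ is bounded from below on $B/2$ by a positive number; (iv) $k(-x)=k(x)$. For $h>0$, $k_h(u)=k(u/h)$. $\mu^t$ is the conditional law of $X_1$ given $X_1\in\mathcal L(t)$; $K_h(x)=\int_{\mathcal L(t)}k_h(y-x)\,\mu^t(dy)$; $q_h(x,y)=k_h(y-x)/K_h(x)$. *)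

From HB Require Import structures.
From mathcomp Require Import all_boot all_order all_algebra.
From mathcomp Require Import all_classical all_reals all_analysis.
Set Implicit Arguments. Unset Strict Implicit. Unset Printing Implicit Defensive.
Import Order.TTheory GRing.Theory Num.Theory.
Import numFieldNormedType.Exports.
Local Open Scope classical_set_scope.
Local Open Scope ring_scope.

(* R^d with its Borel sigma-algebra (generated by the open sets of the
   usual (product = Euclidean) topology on 'rV[R]_d). *)
Definition Rd (R : realType) (d : nat) := g_sigma_algebraType (@open 'rV[R]_d).

Definition enorm (R : realType) (d : nat) (x : 'rV[R]_d) : R :=
  Num.sqrt (\sum_(i < d) x ord0 i ^+ 2).

Definition set_dist (R : realType) (d : nat) (A B : set 'rV[R]_d) : R :=
  inf [set enorm (x - y) | x in A & y in B].

Definition eball (R : realType) (d : nat) (r : R) : set 'rV[R]_d :=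
  [set x | enorm x <= r].

Definition evec (R : realType) (d : nat) (i : 'I_d) : 'rV[R]_d := delta_mx ord0 i.
Arguments evec {R d}.

Definition partial (R : realType) (d : nat) (i : 'I_d) (f : 'rV[R]_d -> R)
  : 'rV[R]_d -> R := fun x => 'D_(evec i) f x.

Definition grad (R : realType) (d : nat) (f : 'rV[R]_d -> R) (x : 'rV[R]_d)
  : 'rV[R]_d := \row_i partial i f x.

Definition C2 (R : realType) (d : nat) (f : 'rV[R]_d -> R) : Prop :=
  continuous f /\
  (forall i x, derivable f x (evec i)) /\
  (forall i, continuous (partial i f)) /\
  (forall i j x, derivable (partial i f) x (evec j)) /\
  (forall i j, continuous (partial j (partial i f))).

Definition Lset (R : realType) (d : nat) (f : 'rV[R]_d -> R) (s : R) : set 'rV[R]_d :=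
  [set x | s <= f x].

Definition kh (R : realType) (d : nat) (k : 'rV[R]_d -> R) (h : R) (u : 'rV[R]_d) : R :=
  k (h^-1 *: u).

Definition Kh (R : realType) (d : nat) (mut : {measure set (Rd R d) -> \bar R})
  (L : set 'rV[R]_d) (k : 'rV[R]_d -> R) (h : R) (x : 'rV[R]_d) : R :=
  Rintegral mut L (fun y : Rd R d => kh k h (y - x)).

Definition qh (R : realType) (d : nat) (mut : {measure set (Rd R d) -> \bar R})
  (L : set 'rV[R]_d) (k : 'rV[R]_d -> R) (h : R) (x y : 'rV[R]_d) : R :=
  kh k h (y - x) / Kh mut L k h x.

Definition Qh (R : realType) (d : nat) (mut : {measure set (Rd R d) -> \bar R})
  (L : set 'rV[R]_d) (k : 'rV[R]_d -> R) (h : R) (g : 'rV[R]_d -> R)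
  (x : 'rV[R]_d) : R :=
  Rintegral mut L (fun y : Rd R d => qh mut L k h x y * g y).

From HB Require Import structures.
From mathcomp Require Import all_boot all_order all_algebra.
From mathcomp Require Import all_classical all_reals all_analysis.
From mathcomp Require Import ring lra measurable_realfun.
Import Order.TTheory GRing.Theory Num.Theory.
Import numFieldNormedType.Exports.
Local Open Scope classical_set_scope.
Local Open Scope ring_scope.
Set Implicit Arguments. Unset Strict Implicit. Unset Printing Implicit Defensive.

(* On a component C of L(t) the continuous function g attains its maximum M.
   If g(x) = M, then x is a fixed point of the averaging operator Q_h, and since
   h < d_min the kernel k_h(. - x) only sees points of C, where g <= M; hence
   the continuous nonnegative function k_h(y - x)(M - g(y)) has zero
   mu^t-integral.  Because the gradient of f does not vanish on {f = t}, every
   ball around a point of L(t) meets {f > t}, where the density exceeds t, so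
   mu^t charges every relative ball of L(t) and the integrand vanishes on L(t).
   As k >= c > 0 on B/2, g = M near x in C.  The set C /\ {g = M} is therefore
   nonempty, relatively open and relatively closed in the connected set C. *)

Section euclidean_norm.
Variables (R : realType) (d : nat).
Implicit Types u v : 'rV[R]_d.

Lemma enorm_ge0 u : 0 <= enorm u.
Proof. exact: sqrtr_ge0. Qed.

Lemma enormZ (a : R) u : enorm (a *: u) = `|a| * enorm u.
Proof.
rewrite /enorm -sqrtr_sqr -sqrtrM ?sqr_ge0 // mulr_sumr.
by congr Num.sqrt; apply: eq_bigr => i _; rewrite mxE exprMn.
Qed.

Lemma enormB u v : enorm (u - v) = enorm (v - u).
Proof.
by rewrite /enorm; congr Num.sqrt; apply: eq_bigr => i _; rewrite !mxE -sqrrN opprB.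
Qed.

Lemma coord_le_mx_norm u i : `|u ord0 i| <= `|u|.
Proof.
rewrite [leRHS]/Num.Def.normr /= mx_normrE.
by apply/bigmax_geP; right; exists (ord0, i).
Qed.

Lemma mx_norm_lt u e : 0 < e -> (forall i, `|u ord0 i| < e) -> `|u| < e.
Proof.
move=> e0 ue; rewrite [ltLHS]/Num.Def.normr /= mx_normrE.
by apply/bigmax_ltP; split => //= -[a i] _; rewrite (ord1 a).
Qed.

Lemma enorm_le_mx_norm u : enorm u <= d%:R * `|u|.
Proof.
rewrite /enorm -(@ger0_norm _ (d%:R * `|u|)) ?mulr_ge0 //.
rewrite -sqrtr_sqr ler_sqrt ?sqr_ge0 //.
apply: (@le_trans _ _ (\sum_(i < d) `|u| ^+ 2)).
  apply: ler_sum => i _; have := coord_le_mx_norm u i.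
  by rewrite ler_norml => /andP[? ?]; nra.
have dd : d%:R <= d%:R ^+ 2 :> R.
  by rewrite -natrX ler_nat; case: d => // n; rewrite -mulnn leq_pmulr.
rewrite sumr_const card_ord -mulr_natr exprMn.
have := sqr_ge0 `|u|; nra.
Qed.

Lemma near_enorm_le (x : 'rV[R]_d) (e : R) : 0 < e ->
  \forall y \near x, enorm (y - x) <= e.
Proof.
move=> e0; have d1 : 0 < d%:R + 1 :> R by rewrite ltr_wpDl.
apply/nbhs_ballP; exists (e / (d%:R + 1)); first by rewrite /= divr_gt0.
move=> y; rewrite /= -ball_normE /= distrC => xy.
apply: (le_trans (enorm_le_mx_norm _)).
rewrite ltr_pdivlMr // in xy; have := normr_ge0 (y - x); nra.
Qed.

End euclidean_norm.

Lemma Rd_open_measurable (R : realType) d (A : set 'rV[R]_d) :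
  open A -> measurable (A : set (Rd R d)).
Proof. exact: sub_sigma_algebra. Qed.

Lemma Rd_within_continuous_measurable_fun (R : realType) d (D : set (Rd R d))
    (F : 'rV[R]_d -> R) :
  measurable D -> {within (D : set 'rV[R]_d), continuous F} ->
  measurable_fun D (F : Rd R d -> R).
Proof.
move=> mD /continuousP cF.
apply: (measurability _ (measurable_realfun.RGenOpens.measurableE R)).
move=> _ [_ [a [b ->]] <-].
have /open_subspaceP [V oV VD] := cF _ (@itv_open _ R a b).
by rewrite setIC -VD; apply: measurableI => //; exact: Rd_open_measurable.
Qed.

Lemma Rd_compact_continuous_integrable (R : realType) d
    (mu : {measure set (Rd R d) -> \bar R}) (L : set 'rV[R]_d) (F : 'rV[R]_d -> R) :
  measurable (L : set (Rd R d)) -> compact L -> (mu L < +oo)%E ->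
  {within L, continuous F} -> mu.-integrable (L : set (Rd R d)) (EFin \o (F : Rd R d -> R)).
Proof.
move=> mL cL muL cF; have [->|L0] := eqVneq L set0.
  exact: integrable_set0.
have /set0P L0' := L0.
apply: measurable_bounded_integrable => //.
  exact: Rd_within_continuous_measurable_fun.
have cnF : {within L, continuous (fun x => `|F x|)}.
  by move=> x; apply: continuous_comp (cF x) (@norm_continuous _ _ _).
have [c _ Fc] := EVT_max_rV L0' cL cnF.
exists `|F c|; split; first exact: num_real.
by move=> M cM x Lx; apply: le_trans (ltW cM); apply: Fc; exact/mem_set.
Qed.

Lemma Rd_box_measurable (R : realType) d (a b : 'rV[R]_d) :
  measurable [set x : Rd R d | forall i, a ord0 i <= x ord0 i < b ord0 i].
Proof.
have -> : [set x : Rd R d | forall i, a ord0 i <= x ord0 i < b ord0 i] =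
    \bigcap_(i in [set: 'I_d]) ((fun x : Rd R d => x ord0 i) @^-1` `[a ord0 i, b ord0 i[).
  apply/seteqP; split => x /= xab; first by move=> i _; rewrite /= in_itv /=; exact: xab.
  by move=> i; have := xab i I; rewrite /= in_itv.
apply: fin_bigcap_measurable; first exact: finite_finset.
move=> i _; rewrite -[X in measurable X]setTI.
apply: Rd_within_continuous_measurable_fun => //.
by apply: continuous_subspaceT; exact: coord_continuous.
Qed.

Lemma dist_lt_normr_mul_gt0 (R : realDomainType) (p q : R) : `|p - q| < `|p| -> 0 < p * q.
Proof.
rewrite -ltr_sqr ?inE ?normr_ge0 // !real_normK ?num_real //; nra.
Qed.

Lemma derive_neq0_exists_gt (R : realType) (V : normedModType R) (F : V -> R) (x v : V) :
  derivable F x v -> 'D_v F x != 0 ->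
  forall e, 0 < e -> exists s : R, `|s| < e /\ F x < F (s *: v + x).
Proof.
move=> dF p0 e e0; set p := 'D_v F x in p0.
have Fq : (fun s : R => s^-1 *: (F (s *: v + x) - F x)) @ 0^' --> p := dF.
have [del /= del0 Fdel] := cvgr_dist_lt _ _ Fq _ (eqbRL (normr_gt0 p) p0).
set m := Num.min del e; have m0 : 0 < m by rewrite lt_min del0 e0.
(* The step s := eta * p has the sign of p, and the difference quotient at s
   has the sign of p as well, so F increases from x to s *: v + x. *)
set eta := m / (2 * (`|p| + 1)).
have p1 : 0 < 2 * (`|p| + 1) by rewrite mulr_gt0 // ltr_wpDl.
have eta0 : 0 < eta by rewrite divr_gt0.
have etam : eta * (2 * (`|p| + 1)) = m by rewrite divfK ?gt_eqF.
have sm : `|eta * p| < m.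
  by rewrite normrM gtr0_norm //; have := normr_ge0 p; nra.
have [md me] : m <= del /\ m <= e by split; rewrite /m ge_min lexx ?orbT.
exists (eta * p); split; first exact: lt_le_trans sm me.
have := Fdel (eta * p); rewrite /= sub0r normrN => /(_ (lt_le_trans sm md)).
move=> /(_ (mulf_neq0 (lt0r_neq0 eta0) p0)) /dist_lt_normr_mul_gt0.
rewrite [_ *: _]/(_ * _) invfM mulrA mulrCA mulfV // mulr1 pmulr_rgt0 ?invr_gt0 //; lra.
Qed.

Section level_set_measure.
Variables (R : realType) (d : nat) (lam mu : {measure set (Rd R d) -> \bar R}).
Variables (f : 'rV[R]_d -> R) (t : R).
Hypothesis lam_box : forall a b : 'rV[R]_d, (forall i, a ord0 i <= b ord0 i) ->
  lam [set x : Rd R d | forall i, a ord0 i <= x ord0 i < b ord0 i]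
    = (\prod_(i < d) (b ord0 i - a ord0 i))%:E.
Hypothesis f_measurable : measurable_fun setT (f : Rd R d -> R).
Hypothesis mu_density : forall A : set (Rd R d), measurable A ->
  mu A = (\int[lam]_(x in A) (f x)%:E)%E.
Hypothesis t0 : 0 < t.

Lemma Lset_measurable : measurable (Lset f t : set (Rd R d)).
Proof.
have -> : (Lset f t : set (Rd R d)) = f @^-1` `[t, +oo[%classic.
  by apply/seteqP; split => z /=; rewrite in_itv /= andbT.
by rewrite -[X in measurable X]setTI; apply: f_measurable => //; exact: measurable_itv.
Qed.

Lemma density_gt_ball_measure_gt0 (z : 'rV[R]_d) (rho : R) : 0 < rho ->
  (forall w, ball z rho w -> t < f w) -> (0 < mu (ball z rho))%E.
Proof.
move=> rho0 fz; set a := z - const_mx (rho / 2); set b := z + const_mx (rho / 2).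
set B := [set x : Rd R d | forall i, a ord0 i <= x ord0 i < b ord0 i].
have mB : measurable B := Rd_box_measurable a b.
have Bz : B `<=` ball z rho.
  move=> w Bw; rewrite -ball_normE /=; apply: mx_norm_lt => // i.
  have := Bw i; rewrite /a /b !mxE => /andP[aw wb].
  by rewrite ltr_norml; apply/andP; split; lra.
have ab i : a ord0 i <= b ord0 i by rewrite /a /b !mxE; lra.
have mz : measurable (ball z rho : set (Rd R d)).
  by apply: Rd_open_measurable; exact: ball_open.
suff muB : (0 < mu B)%E.
  exact: lt_le_trans muB (le_measure _ (mem_set mB) (mem_set mz) Bz).
rewrite mu_density //; apply: (@lt_le_trans _ _ (\int[lam]_(x in B) t%:E)%E).
  rewrite integral_cst // lam_box // -EFinM lte_fin mulr_gt0 //.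
  by apply: prodr_gt0 => i _; rewrite /a /b !mxE; lra.
apply: ge0_le_integral => //.
- by move=> x _; rewrite lee_fin ltW.
- by apply/measurable_EFinP; exact: measurable_funS f_measurable.
- by move=> x Bx; rewrite lee_fin; apply/ltW/fz/Bz.
Qed.

Hypothesis f_continuous : continuous f.
Hypothesis f_derivable : forall i x, derivable f x (evec i).
Hypothesis grad_gt0 : forall x, f x = t -> 0 < enorm (grad f x).

Lemma Lset_near_gt (y : 'rV[R]_d) (r : R) : Lset f t y -> 0 < r ->
  exists z, ball y r z /\ t < f z.
Proof.
move=> ty r0; have [yt|] := ltrP t (f y); first by exists y; split => //; exact: ballxx.
move=> fyt; have {ty fyt} fy : f y = t by apply/eqP; rewrite eq_le fyt ty.
have [i fi] : exists i, partial i f y != 0.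
  apply: contrapT => /forallNP fi0; move: (grad_gt0 fy).
  rewrite /enorm big1 ?sqrtr0 ?ltxx // => i _.
  by rewrite /grad mxE; have /negP/negbNE/eqP -> := fi0 i; rewrite expr0n.
have [s [sr fs]] := derive_neq0_exists_gt (@f_derivable i y) fi r0.
exists (s *: evec i + y); split; last by rewrite -fy.
rewrite -ball_normE /=; apply: mx_norm_lt => // j.
rewrite !mxE opprD addrCA subrr addr0 normrN.
by case: (j == i); rewrite /= ?mulr1 ?mulr0 ?normr0.
Qed.

Lemma Lset_ball_measure_gt0 (y : 'rV[R]_d) (r : R) : Lset f t y -> 0 < r ->
  (0 < mu (Lset f t `&` ball y r))%E.
Proof.
move=> Ly r0; have r20 : 0 < r / 2 by rewrite divr_gt0.
have [z [yz tz]] := Lset_near_gt Ly r20.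
have fzt : \forall w \near z, t < f w by exact: cvgr_gt (@f_continuous z) _ tz.
have /nbhs_ballP[rho /= rho0 zrho] := fzt.
set rho' := Num.min rho (r / 2); have rho'0 : 0 < rho' by rewrite lt_min rho0 r20.
have fz w : ball z rho' w -> t < f w.
  by move=> zw; apply: zrho; apply: le_ball zw; rewrite ge_min lexx.
have zL : ball z rho' `<=` Lset f t `&` ball y r.
  move=> w zw; split; first exact/ltW/fz.
  have : ball z (r / 2) w by apply: le_ball zw; rewrite ge_min lexx orbT.
  by move/(ball_triangle yz); rewrite -splitr.
apply: (lt_le_trans (density_gt_ball_measure_gt0 rho'0 fz)).
have mz : measurable (ball z rho' : set (Rd R d)).
  by apply: Rd_open_measurable; exact: ball_open.
have mLr : measurable (Lset f t `&` ball y r : set (Rd R d)).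
  apply: measurableI; first exact: Lset_measurable.
  by apply: Rd_open_measurable; exact: ball_open.
exact: le_measure (mem_set mz) (mem_set mLr) zL.
Qed.

End level_set_measure.

Section conditional_measure.
Variables (d : measure_display) (T : measurableType d) (R : realType).
Variables (mu mut : {measure set T -> \bar R}) (L : set T).
Hypotheses (mL : measurable L) (mu_le1 : (mu L <= 1)%E).
Hypothesis mut_def : forall A, measurable A -> mut A = (mu (A `&` L) * ((fine (mu L))^-1)%:E)%E.

Lemma conditional_measure_lt_pinfty : (mut L < +oo)%E.
Proof.
have muL : mu L \is a fin_num by rewrite ge0_fin_numE // (le_lt_trans mu_le1) ?ltry.
by rewrite mut_def // setIid ltey_eq fin_numM.
Qed.

Lemma conditional_measure_gt0 A : measurable A -> A `<=` L -> (0 < mu A)%E -> (0 < mut A)%E.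
Proof.
move=> mA AL muA; have muAL : (mu A <= mu L)%E by apply: le_measure; rewrite ?inE.
rewrite mut_def // (setIidl AL) mule_gt0 // lte_fin invr_gt0 fine_gt0 //.
by rewrite (lt_le_trans muA muAL) (le_lt_trans mu_le1) ?ltry.
Qed.

End conditional_measure.

Lemma mul_measure_le_Rintegral (R : realType) d (mu : {measure set (Rd R d) -> \bar R})
    (L A : set (Rd R d)) (F : Rd R d -> R) (a : R) :
  measurable L -> measurable A -> A `<=` L -> (mu L < +oo)%E ->
  mu.-integrable L (EFin \o F) -> (forall x, L x -> 0 <= F x) ->
  (forall x, A x -> a <= F x) -> 0 <= a ->
  a * fine (mu A) <= Rintegral mu L F.
Proof.
move=> mL mA AL muL iF F0 Fa a0.
have muA : mu A \is a fin_num.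
  by rewrite ge0_fin_numE // (le_lt_trans _ muL) //; apply: le_measure; rewrite ?inE.
have [mF _] := integrableP _ _ _ iF.
rewrite -lee_fin /Rintegral fineK; last exact: integrable_fin_num.
rewrite EFinM fineK // -integral_cst //.
apply: (@le_trans _ _ (\int[mu]_(x in A) (F x)%:E)%E).
  by apply: ge0_le_integral => //; exact: (measurable_funS mL AL mF).
exact: (ge0_subset_integral mu mA mL mF).
Qed.

Section averaging_on_a_compact_set.
Variables (R : realType) (d : nat) (mu : {measure set (Rd R d) -> \bar R}).
Variable L : set 'rV[R]_d.
Hypotheses (mL : measurable (L : set (Rd R d))) (cL : compact L) (muL : (mu L < +oo)%E).
Hypothesis mu_ball_gt0 : forall z r, L z -> 0 < r -> (0 < mu (L `&` ball z r))%E.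

Lemma within_continuous_ge0_Rintegral_eq0 (F : 'rV[R]_d -> R) :
  {within L, continuous F} -> (forall x, L x -> 0 <= F x) ->
  Rintegral mu (L : set (Rd R d)) (F : Rd R d -> R) = 0 ->
  forall z, L z -> F z = 0.
Proof.
move=> cF F0 IF0 z Lz; apply/eqP; rewrite eq_le F0 // andbT leNgt; apply/negP => Fz0.
have Fz2 : 0 < F z / 2 by rewrite divr_gt0.
have Fz2z : F z / 2 < F z by rewrite ltr_pdivrMr // ltr_pMr // ltr1n.
have [r r0 Fr] : exists2 r, 0 < r & forall w, ball z r w -> L w -> F z / 2 < F w.
  have : \forall w \near within L (nbhs z), F z / 2 < F w.
    by apply: cvgr_gt Fz2z; exact: (subspace_continuousP _ _).1 cF z Lz.
  by move=> /nbhs_ballP[r r0 Fr]; exists r.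
have mLr : measurable (L `&` ball z r : set (Rd R d)).
  by apply: measurableI => //; apply: Rd_open_measurable; exact: ball_open.
have := mul_measure_le_Rintegral mL mLr (@subIsetl _ _ _) muL
  (Rd_compact_continuous_integrable mL cL muL cF) F0
  (fun w '(conj Lw zw) => ltW (Fr w zw Lw)) (ltW Fz2).
rewrite IF0 pmulr_rle0 // leNgt => /negP; apply; apply: fine_gt0.
rewrite mu_ball_gt0 //= (le_lt_trans _ muL) //.
by apply: le_measure; rewrite ?inE //; exact: subIsetl.
Qed.

Lemma kernel_average_eq_max (K g : 'rV[R]_d -> R) (M : R) (x : 'rV[R]_d) :
  {within L, continuous K} -> {within L, continuous g} ->
  (forall y, L y -> 0 <= K y) -> L x -> 0 < K x ->
  (forall y, L y -> K y != 0 -> g y <= M) ->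
  Rintegral mu (L : set (Rd R d))
    (fun y : Rd R d => K y / Rintegral mu (L : set (Rd R d)) (K : Rd R d -> R) * g y) = M ->
  forall y, L y -> K y * (M - g y) = 0.
Proof.
move=> cK cg K0 Lx Kx0 gM avgM.
have iK := Rd_compact_continuous_integrable mL cL muL cK.
have cKg : {within L, continuous (K \* g)} by move=> z; exact: continuousM (cK z) (cg z).
have iKg := Rd_compact_continuous_integrable mL cL muL cKg.
set IK := Rintegral mu (L : set (Rd R d)) (K : Rd R d -> R) in avgM.
have IK0 : 0 < IK.
  have IKge0 : 0 <= IK by apply: Rintegral_ge0.
  rewrite lt_neqAle IKge0 andbT eq_sym; apply/eqP => IK0.
  by move: Kx0; rewrite (within_continuous_ge0_Rintegral_eq0 cK K0 IK0 Lx) ltxx.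
have IKg : Rintegral mu (L : set (Rd R d)) (fun y : Rd R d => K y * g y) = M * IK.
  have -> : M = IK^-1 * Rintegral mu (L : set (Rd R d)) (fun y : Rd R d => K y * g y).
    by rewrite -avgM -RintegralZl //; apply: eq_Rintegral => y _; ring.
  by rewrite mulrAC mulVf ?gt_eqF // mul1r.
apply: within_continuous_ge0_Rintegral_eq0.
- move=> z; apply: continuousM (cK z) _.
  exact: continuousB (@cst_continuous _ _ M z) (cg z).
- move=> y Ly; have [->|Ky0] := eqVneq (K y) 0; first by rewrite mul0r.
  by rewrite mulr_ge0 ?K0 // subr_ge0 gM.
- transitivity (Rintegral mu (L : set (Rd R d)) (fun y : Rd R d => M * K y - K y * g y)).
    by apply: eq_Rintegral => y _; ring.
  rewrite RintegralB //; first by rewrite RintegralZl // IKg subrr.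
  apply: Rd_compact_continuous_integrable => // z.
  exact: continuousM (@cst_continuous _ _ M z) (cK z).
Qed.

End averaging_on_a_compact_set.

Section bandwidth_kernel.
Variables (R : realType) (d : nat) (k : 'rV[R]_d -> R) (h : R).
Hypothesis h0 : 0 < h.

Lemma kh_eq0 u : closure [set v | k v != 0] = eball 1 -> h < enorm u -> kh k h u = 0.
Proof.
move=> ksupp hu; apply/eqP; apply: contraTT hu => ku; rewrite -leNgt.
have : closure [set v | k v != 0] (h^-1 *: u) by exact: subset_closure.
by rewrite ksupp /eball /= enormZ gtr0_norm ?invr_gt0 // ler_pdivrMl // mulr1.
Qed.

Lemma kh_ge (c : R) u : (forall v, eball (1 / 2) v -> c <= k v) ->
  enorm u <= h / 2 -> c <= kh k h u.
Proof.
move=> kc hu; apply: kc; rewrite /eball /= enormZ gtr0_norm ?invr_gt0 //.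
by rewrite ler_pdivrMl //; lra.
Qed.

Lemma kh_shift_continuous (x : 'rV[R]_d) :
  continuous k -> continuous (fun y : 'rV[R]_d => kh k h (y - x)).
Proof.
move=> kc y.
have shiftc : {for y, continuous (fun w : 'rV[R]_d => h^-1 *: (w - x))}.
  apply: (continuousZl_tmp (k := h^-1)).
  by apply: (@continuousB _ _ _ id (cst x) y); last exact: cst_continuous.
exact: continuous_comp shiftc (kc _).
Qed.

End bandwidth_kernel.

Lemma close_point_component (R : realType) d (L : set 'rV[R]_d) ell
    (C : 'I_ell -> set 'rV[R]_d) (h : R) :
  (forall x, L x -> exists i, C i x) ->
  (forall i j, i != j -> h < set_dist (C i) (C j)) ->
  forall i x z, C i x -> L z -> enorm (z - x) <= h -> C i z.
Proof.
move=> Ccover Csep i x z Cx Lz zx; have [j Cz] := Ccover z Lz.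
have [->//|ij] := eqVneq i j.
have : set_dist (C i) (C j) <= enorm (x - z).
  apply: ge_inf; last by exists x => //; exists z.
  by exists 0 => _ [u _ [v _ <-]]; exact: enorm_ge0.
by have := Csep _ _ ij; rewrite enormB; lra.
Qed.

Lemma compact_connected_component (T : topologicalType) (A : set T) (x : T) :
  hausdorff_space T -> compact A -> compact (connected_component A x).
Proof.
move=> hT cA; apply: (subclosed_compact _ cA); last exact: connected_component_sub.
exact/component_closed/(compact_closed hT).
Qed.

Lemma connected_locally_constant_level (T : topologicalType) (R : realType)
    (A : set T) (g : T -> R) (M : R) (x0 : T) :
  connected A -> {within A, continuous g} -> A x0 -> g x0 = M ->
  (forall x, A x -> g x = M -> \forall y \near x, A y -> g y = M) ->
  forall y, A y -> g y = M.
Proof.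
move=> Aconn gcont Ax0 gx0 gloc.
suff <- : A `&` [set y | g y = M] = A by move=> y [].
apply: Aconn; first by exists x0.
- exists [set y | A y -> g y = M]°; first exact: open_interior.
  apply/seteqP; split => [y [Ay gy]|y [Ay /interior_subset gy]]; last by split; [|exact: gy].
  by split => //; exact: gloc.
- have /closed_subspaceP[V Vclosed VA] : closed (g @^-1` [set M] : set (subspace A)).
    by apply: preimage_closed; [move=> z _; exact: gcont|exact: closed_eq].
  by exists V => //; rewrite [RHS]setIC VA [RHS]setIC.
Qed.

Unset Implicit Arguments.
Theorem propositionC2 (R : realType) (d : nat)
  (* Lebesgue measure on the Borel sets of R^d (characterized on boxes) *)
  (lam : {measure set (Rd R d) -> \bar R})
  (Hlam : forall a b : 'rV[R]_d, (forall i, a ord0 i <= b ord0 i) ->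
     lam [set x : Rd R d | forall i, a ord0 i <= x ord0 i < b ord0 i]
       = (\prod_(i < d) (b ord0 i - a ord0 i))%:E)
  (* mu: law of X_1, with Lebesgue density f *)
  (mu : {measure set (Rd R d) -> \bar R})
  (f : 'rV[R]_d -> R)
  (Hmu1 : mu setT = 1%E)
  (Hf0 : forall x, 0 <= f x)
  (Hfmeas : measurable_fun setT (f : Rd R d -> R))
  (Hdens : forall A : set (Rd R d), measurable A ->
     mu A = (\int[lam]_(x in A) (f x)%:E)%E)
  (t : R) (Ht0 : 0 < t) (Htint : ((range f)°) t)
  (HLne : Lset f t !=set0) (HLcpt : compact (Lset f t))
  (* connected components C_1, ..., C_ell of L(t) *)
  (ell : nat) (C : 'I_ell -> set 'rV[R]_d)
  (HCcomp : forall i, exists2 x, Lset f t x & C i = connected_component (Lset f t) x)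
  (HCinj : forall i j, C i = C j -> i = j)
  (HCcover : forall x, Lset f t x -> exists i, C i x)
  (* Assumption 1 *)
  (HfC2 : C2 f)
  (Hgrad : forall x, f x = t -> 0 < enorm (grad f x))
  (Hfbd : exists M : R, forall x,
     `|f x| <= M /\ (forall i, `|partial i f x| <= M) /\
     (forall i j, `|partial j (partial i f) x| <= M))
  (* Assumption 2 *)
  (k : 'rV[R]_d -> R)
  (Hk0 : forall u, 0 <= k u)
  (HkC2 : C2 k)
  (Hksupp : closure [set u | k u != 0] = @eball R d 1)
  (Hklow : exists2 c : R, 0 < c & forall u, @eball R d (1/2) u -> c <= k u)
  (Hksym : forall u, k (- u) = k u)
  (* mu^t: conditional law of X_1 given X_1 in L(t) *)
  (mut : {measure set (Rd R d) -> \bar R})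
  (Hmut : forall A : set (Rd R d), measurable A ->
     mut A = (mu (A `&` Lset f t) * ((fine (mu (Lset f t)))^-1)%:E)%E)
  (* bandwidth h in (0, d_min) *)
  (h : R) (Hh0 : 0 < h)
  (Hhdmin : forall i j, i != j -> h < set_dist (C i) (C j))
  (g : 'rV[R]_d -> R)
  (Hgcont : {within Lset f t, continuous g})
  (Hgbd : exists M : R, forall x, Lset f t x -> `|g x| <= M)
  (HQg : forall x, Lset f t x -> Qh mut (Lset f t) k h g x = g x) :
  forall i x y, C i x -> C i y -> g x = g y.
Proof.
move=> i x y Cx Cy; set L := Lset f t.
have mL : measurable (L : set (Rd R d)) := Lset_measurable t Hfmeas.
have muL1 : (mu L <= 1)%E by rewrite -Hmu1; apply: le_measure; rewrite ?inE.
have mutL := conditional_measure_lt_pinfty mL muL1 Hmut.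
have mut_ball z r : L z -> 0 < r -> (0 < mut (L `&` ball z r))%E.
  move=> Lz r0; apply: (conditional_measure_gt0 mL muL1 Hmut) => //.
  - by apply: measurableI => //; apply: Rd_open_measurable; exact: ball_open.
  - exact: (Lset_ball_measure_gt0 Hlam Hfmeas Hdens Ht0 (proj1 HfC2)
      (proj1 (proj2 HfC2)) Hgrad Lz r0).
have [x0 _ Cdef] := HCcomp i.
have CiL : C i `<=` L by rewrite Cdef; exact: connected_component_sub.
have Cicpt : compact (C i).
  by rewrite Cdef; apply: compact_connected_component HLcpt; exact: norm_hausdorff.
have gCi : {within C i, continuous g} := continuous_subspaceW CiL Hgcont.
have [xm /set_mem Cxm gmax] := EVT_max_rV (ex_intro _ x Cx) Cicpt gCi.
have [c c0 kc] := Hklow.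
suff gM z : C i z -> g z = g xm by rewrite !gM.
apply: (connected_locally_constant_level _ gCi Cxm erefl) => [|x1 Cx1 gx1].
  by rewrite Cdef; exact: component_connected.
have near_x1 := near_enorm_le x1 (divr_gt0 Hh0 (ltr0n _ 2)).
have Kx1_support w : L w -> kh k h (w - x1) != 0 -> g w <= g xm.
  move=> Lw Kw; apply/gmax/mem_set/(close_point_component HCcover Hhdmin Cx1 Lw).
  by rewrite leNgt; apply: contra Kw => /(kh_eq0 Hh0 Hksupp) ->.
have Kfix := kernel_average_eq_max mL HLcpt mutL mut_ball
  (continuous_subspaceT (@kh_shift_continuous _ _ k h x1 (proj1 HkC2))) Hgcont
  (fun w _ => Hk0 _) (CiL _ Cx1) (lt_le_trans c0 (kh_ge Hh0 kc (nbhs_singleton near_x1)))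
  Kx1_support (etrans (HQg x1 (CiL _ Cx1)) gx1).
apply: filterS near_x1 => w wx1 Cw.
have /eqP := Kfix w (CiL _ Cw); rewrite mulf_eq0 subr_eq0 => /orP[/eqP Kw0|/eqP->//].
by have := kh_ge Hh0 kc wx1; rewrite Kw0; lra.
Qed.
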